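(* Let $\mathcal S=(P_-^\Gamma)_{\Gamma\in F}$ be a subtraction scheme of regular type (RT), and let $\mathcal P_+$ be the induced operator on the group $G$ of characters. Then for all $\phi,\psi\in G$, $$\mathcal P_+\big(\mathcal P_+(\phi)\ast\mathcal P_+(\psi)\big)=\mathcal P_+(\phi)\ast\mathcal P_+(\psi).$$
   Context: Fix a renormalisable quantum field theory. $F$ denotes the set of one-particle-irreducible (1PI) ultraviolet-divergent Feynman graphs, and $H$ the free commutative polynomial algebra over $\mathbb C$ generated by $F$ (product = disjoint union, written by concatenation, unit $\mathbb 1$ = empty graph), graded by loop number, with $H_0=\mathbb C$; $\pi_{(n)}$ is the projection onto $H_n$ and $\phi_{(n)}:=\phi\circ\pi_{(n)}$. For $\Gamma\in F$, a proper spinney $S$ of $\Gamma$ is a nonempty set of pairwise disjoint (non-overlapping, non-nested, non-touching) proper 1PI UV-divergent subgraphs of $\Gamma$; $W(\Gamma)$ is the set of proper spinneys, and $\Gamma/S\in F$ is the graph obtained by contracting each element of $S$ to a point (it has the same external momenta and same overall degree of divergence as $\Gamma$). $H$ is a graded connected commutative Hopf algebra with coproduct $\Delta(\Gamma)=\Gamma\otimes\mathbb 1+\mathbb 1\otimes\Gamma+\sum_{S\in W(\Gamma)}\prod_{\gamma\in S}\gamma\otimes\Gamma/S$. For each $\Gamma\in F$, $A_\Gamma$ is a commutative unital algebra (regularised amplitudes, functions of the external momenta of $\Gamma$), and integration over internal momenta gives maps $A_{\gamma_1}\otimes\cdots\otimes A_{\gamma_n}\otimes A_{\Gamma/S}\to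 A_\Gamma$ for $S=\{\gamma_1,\dots,\gamma_n\}\in W(\Gamma)$; expressions like $\big(\prod_{\gamma\in S}x_\gamma\big)x_{\Gamma/S}$ denote the resulting element of $A_\Gamma$. An $F$-adapted linear form is a family of linear maps $\mathbb C\cdot\Gamma_1\cdots\Gamma_n\to (A_{\Gamma_1}\otimes\cdots\otimes A_{\Gamma_n})_{S_n}$; their convolution is $(\phi\ast\psi)(h)=\phi(h^{(1)})\psi(h^{(2)})$ (Sweedler notation, integrations understood). A character is a multiplicative unital $F$-adapted form ($\phi(hg)=\phi(h)\phi(g)$, $\phi(\mathbb 1)=1$); characters form a group $G$ under $\ast$ with unit $e$ (projection onto $H_0$). A subtraction scheme is a family of linear projectors $P_-^\Gamma$ on $A_\Gamma$, $\Gamma\in F$; set $P_+^\Gamma:=\mathrm{id}-P_-^\Gamma$. It is of regular type (RT) if for every $\Gamma\in F$, every $S\in W(\Gamma)$, every $x_\Gamma\in A_\Gamma$ and every family $x_\gamma\in A_\gamma$ ($\gamma\in S$): $P_+^\Gamma\big((\prod_{\gamma\in S}P_+^\gamma(x_\gamma))P_+^{\Gamma/S}(x_\Gamma)\big)=(\prod_{\gamma\in S}P_+^\gamma(x_\gamma))P_+^{\Gamma/S}(x_\Gamma)$. The induced operators $\mathcal P_\pm$ on $G$ are $\mathcal P_\pm(\phi)(\Gamma_1\cdots\Gamma_k):=P_\pm^{\Gamma_1}(\phi(\Gamma_1))\cdots P_\pm^{\Gamma_k}(\phi(\Gamma_k))$ for $\Gamma_i\in F$, and $\mathcal P_\pm(\phi)(\mathbb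 1)=1$. *)

From HB Require Import structures.
From mathcomp Require Import all_boot all_order all_algebra.
Set Implicit Arguments. Unset Strict Implicit. Unset Printing Implicit Defensive.
Import GRing.Theory.
Local Open Scope ring_scope.

(* Abstract data of a renormalisable QFT, over a base field K (C in the paper).
   - [graph]      : the set F of 1PI UV-divergent graphs (generators of H);
   - [spinney G]  : the finite set W(G) of proper spinneys of G;
   - a spinney S consists of [ncomp S] >= 1 (pairwise disjoint, proper)
     subgraphs [comp S k], k < ncomp S, and has quotient graph [quot S] = G/S;
   - [amp G]      : the commutative unital K-algebra A_G;
   - [integ S]    : the integration map
        A_{g_1} (x) ... (x) A_{g_n} (x) A_{G/S} -> A_G,
     given on elementary tensors. *)
Record qft_data (K : fieldType) := QFTData {
  graph : Type;
  spinney : graph -> finType;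
  ncomp : forall G, spinney G -> nat;
  ncomp_gt0 : forall G (S : spinney G), (0 < ncomp S)%N;
  comp : forall G (S : spinney G), 'I_(ncomp S) -> graph;
  quot : forall G, spinney G -> graph;
  amp : graph -> comAlgType K;
  integ : forall G (S : spinney G),
      (forall k : 'I_(ncomp S), amp (comp k)) -> amp (quot S) -> amp G
}.

Section Defs.
Variables (K : fieldType) (D : qft_data K).

Definition subtraction_scheme := forall G : graph D, {linear amp G -> amp G}.

Definition is_projector_family (Pm : subtraction_scheme) :=
  forall G (x : amp G), Pm G (Pm G x) = Pm G x.

Definition Pplus (Pm : subtraction_scheme) (G : graph D) (x : amp G) : amp G :=
  x - Pm G x.

Definition regular_type (Pm : subtraction_scheme) :=
  forall (G : graph D) (S : spinney G)
         (xs : forall k : 'I_(ncomp S), amp (comp k)) (x : amp (quot S)),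
    Pplus Pm (integ (fun k => Pplus Pm (xs k)) (Pplus Pm x))
    = integ (fun k => Pplus Pm (xs k)) (Pplus Pm x).

(* A character phi in G (multiplicative, unital F-adapted form on the free
   commutative algebra H) is uniquely determined by, and freely given by, its
   values phi(G) in A_G on the generators G in F. *)
Definition character := forall G : graph D, amp G.

(* Convolution of characters, evaluated on a generator G using
   Delta(G) = G (x) 1 + 1 (x) G + sum_{S in W(G)} prod_{g in S} g (x) G/S. *)
Definition conv (phi psi : character) : character := fun G =>
  phi G + psi G + \sum_(S : spinney G) integ (fun k => phi (comp k)) (psi (quot S)).

Definition Pplus_char (Pm : subtraction_scheme) (phi : character) : character :=
  fun G => Pplus Pm (phi G).

End Defs.

(* P_+ is additive, so P_+ of the convolution splits along the coproduct: the primitive terms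
   P_+ phi(G) and P_+ psi(G) are fixed because P_+ is a projector, and every spinney term has
   exactly the shape that the regular-type condition declares P_+-invariant. *)
From HB Require Import structures.
From mathcomp Require Import all_boot all_order all_algebra.
From Stdlib Require Import FunctionalExtensionality.
Import GRing.Theory.
Local Open Scope ring_scope.

Section Pplus.
Variables (K : fieldType) (D : qft_data K) (Pm : subtraction_scheme D).

Lemma PplusD G (x y : amp G) : Pplus Pm (x + y) = Pplus Pm x + Pplus Pm y.
Proof. by rewrite /Pplus linearD opprD addrACA. Qed.

Lemma Pplus_sum G (I : finType) (f : I -> amp G) :
  Pplus Pm (\sum_i f i) = \sum_i Pplus Pm (f i).
Proof. by rewrite /Pplus linear_sum sumrB. Qed.

Lemma Pplus_id G (x : amp G) :
  is_projector_family Pm -> Pplus Pm (Pplus Pm x) = Pplus Pm x.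
Proof. by move=> Pm_id; rewrite /Pplus linearB Pm_id subrr subr0. Qed.

End Pplus.

Theorem lemma4p1 (K : fieldType) (D : qft_data K) (Pm : subtraction_scheme D)
  (Hproj : is_projector_family Pm) (HRT : regular_type Pm)
  (phi psi : character D) :
  Pplus_char Pm (conv (Pplus_char Pm phi) (Pplus_char Pm psi))
  = conv (Pplus_char Pm phi) (Pplus_char Pm psi).
Proof.
apply: functional_extensionality_dep => G.
rewrite /Pplus_char /conv 2!PplusD Pplus_sum !Pplus_id //.
by congr (_ + _); apply: eq_bigr => S _; apply: HRT.
Qed.
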